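(* Let $\{F_n\}_{n\geq 0}$ be a sequence of positive integers with $F_0=1$ and $F_1=1$, let $\Pi$ be the cobweb poset it determines, and for $n\ge 0$ let $\chi_n(t)=\sum_{x\in P_n}\mu(0,x)\,t^{n-r(x)}$ be the characteristic polynomial of the finite cobweb subposet $P_n$. Then $\chi_0(t)=1$ and $\chi_n(t)=t^n-t^{n-1}$ for all $n\geq 1$.
   Context: Cobweb poset: given the sequence $\{F_n\}_{n\ge 0}$, for $s\geq 0$ let the $s$-th level be $\Phi_s=\{\langle j,s\rangle : 1\leq j\leq F_s\}$, and let $V=\bigcup_{s\geq 0}\Phi_s$. The cobweb poset is $\Pi=(V,\leq)$ where for $x=\langle s,t\rangle$, $y=\langle u,v\rangle$ one has $x\leq y$ iff ($t<v$) or ($t=v$ and $s=u$). Its rank function is $r(x)=s$ for $x\in\Phi_s$. For $n\geq 0$, $P_n$ is the set $\bigcup_{0\leq s\leq n}\Phi_s$ with the induced order; it has unique minimal element $0=\langle 1,0\rangle$. $\mu$ denotes the M\''obius function of $P_n$. *)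

From HB Require Import structures.
From mathcomp Require Import all_boot all_order all_algebra.
Set Implicit Arguments. Unset Strict Implicit. Unset Printing Implicit Defensive.
Import GRing.Theory.
Local Open Scope ring_scope.

(* Fuel #|T| bounds the length of any strict chain, so it never runs out
   on a partial order. *)
Fixpoint mobius_fuel (T : finType) (le : rel T) (k : nat) (x y : T) : int :=
  if x == y then 1
  else if k is k'.+1 then
    (if le x y then
       - \sum_(z : T | le x z && le z y && (z != y)) mobius_fuel le k' x z
     else 0)
  else 0.

Definition mobius (T : finType) (le : rel T) (x y : T) : int :=
  mobius_fuel le #|T| x y.

(* The finite cobweb subposet P_n: elements <j,s> with s <= n and
   j ranging over F s values (the ordinal j : 'I_(F s) encodes j+1). *)
Definition cobweb (F : nat -> nat) (n : nat) : finType :=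
  {s : 'I_n.+1 & 'I_(F s)}.

Definition crank (F : nat -> nat) (n : nat) (x : cobweb F n) : nat := tag x.

Definition cle (F : nat -> nat) (n : nat) : rel (cobweb F n) :=
  fun x y => (crank x < crank y)%N || (x == y).

Definition cobweb_charpoly (F : nat -> nat) (n : nat) (zero : cobweb F n)
  : {poly int} :=
  \sum_(x : cobweb F n) (mobius (@cle F n) zero x)%:P * 'X^(n - crank x).

From mathcomp Require Import all_boot all_order all_algebra.
Set Implicit Arguments. Unset Strict Implicit. Unset Printing Implicit Defensive.
Import GRing.Theory.
Local Open Scope ring_scope.

(* Since F 0 = F 1 = 1, the two lowest levels of P_n are single points
   0 < a.  By induction on the rank, mu(0,x) depends only on r(x) and equals
   1, -1, 0 for r(x) = 0, 1, >= 2: for r(x) = s >= 2 the interval [0,x) is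
   the union of all levels below s, whose Moebius values sum to
   1 - 1 + 0 + ... + 0 = 0.  So chi_n collapses to t^n - t^(n-1). *)

Definition mobius_level (s : nat) : int :=
  if s == 0%N then 1 else if s == 1%N then -1 else 0.

Lemma big_cobweb_rank (V : nmodType) (F : nat -> nat) (n : nat)
    (P : pred nat) (G : nat -> V) :
  \sum_(x : cobweb F n | P (crank x)) G (crank x)
    = \sum_(i < n.+1 | P i) G i *+ F i.
Proof.
transitivity (\sum_(i < n.+1 | P i) \sum_(j : 'I_(F i)) G i).
  rewrite (sig_big_dep (fun i : 'I_n.+1 => P i) (fun _ _ => true)
                       (fun i (_ : 'I_(F i)) => G i)).
  by apply: eq_bigl => x; rewrite andbT.
by apply: eq_bigr => i _; rewrite sumr_const card_ord.
Qed.

Lemma card_cobweb_gt (F : nat -> nat) (n : nat) :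
  (forall m, 0 < F m)%N -> (n < #|cobweb F n|)%N.
Proof.
move=> Fpos; rewrite -sum1_card (@big_cobweb_rank _ F n predT (fun _ => 1%N)).
under eq_bigr do rewrite natn.
have : (\sum_(i < n.+1) 1 <= \sum_(i < n.+1) F i)%N by apply: leq_sum.
by rewrite sum1_card card_ord.
Qed.

Lemma crank0_eq (F : nat -> nat) (n : nat) (x y : cobweb F n) :
  F 0%N = 1%N -> crank x = 0%N -> crank y = 0%N -> x = y.
Proof.
case: x y => [i j] [i' j'] /= F0; rewrite /crank /= => ri ri'.
have ei : i = i' by apply: val_inj; rewrite /= ri ri'.
case: i' / ei j' {ri'} => j'.
suff -> : j = j' by [].
have ord1 (k : 'I_(F i)) : val k = 0%N.
  by apply/eqP; rewrite -leqn0 -ltnS -F0 -ri ltn_ord.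
by apply: val_inj; rewrite /= !ord1.
Qed.

Lemma sum_mobius_level (s : nat) :
  (0 < s)%N -> \sum_(i < s) mobius_level i = (s == 1%N)%:R.
Proof.
case: s => // s _; elim: s => [|s IH]; first by rewrite big_ord1.
by rewrite big_ord_recr /= IH; case: s {IH}.
Qed.

Lemma mobius_level_mulrn (F : nat -> nat) (i : nat) :
  F 0%N = 1%N -> F 1%N = 1%N -> mobius_level i *+ F i = mobius_level i.
Proof. by move=> F0 F1; case: i => [|[|i]] /=; rewrite ?F0 ?F1 ?mul0rn. Qed.

Section CobwebMobius.

Variables (F : nat -> nat) (n : nat) (zero : cobweb F n).
Hypotheses (F0 : F 0%N = 1%N) (F1 : F 1%N = 1%N) (hzero : crank zero = 0%N).

Lemma cle_zero_lt (z x : cobweb F n) : (0 < crank x)%N ->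
  cle zero z && cle z x && (z != x) = (crank z < crank x)%N.
Proof.
move=> rx; rewrite /cle hzero.
have [zx | xz] := ltnP (crank z) (crank x).
  have -> : z != x by apply: contraTneq zx => ->; rewrite ltnn.
  rewrite andbT /=; have [rz0 | //] := posnP (crank z).
  by rewrite (crank0_eq F0 rz0 hzero) eqxx orbT.
by case: (eqVneq z x) => [-> | _]; rewrite /= ?andbF.
Qed.

Lemma mobius_fuel_cobweb (k : nat) (x : cobweb F n) : (crank x < k)%N ->
  mobius_fuel (@cle F n) k zero x = mobius_level (crank x).
Proof.
elim: k x => [|k IH] x // xk /=.
have [<- | nzx] := eqVneq zero x; first by rewrite hzero.
have rx : (0 < crank x)%N.
  by rewrite lt0n; apply: contra_neq nzx => rx0; apply: crank0_eq.
rewrite {1}/cle hzero rx /=.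
rewrite (eq_bigl _ _ (fun z => cle_zero_lt z rx)).
rewrite (eq_bigr (mobius_level \o @crank F n)) => [|z zx]; last first.
  by apply: IH; apply: leq_trans zx xk.
rewrite (@big_cobweb_rank _ F n (fun i => i < crank x)%N mobius_level).
under eq_bigr do rewrite mobius_level_mulrn //.
have rxn : (crank x <= n.+1)%N by apply: ltnW; apply: ltn_ord (tag x).
rewrite -(big_ord_widen _ mobius_level rxn) sum_mobius_level //.
by case: (crank x) rx => [|[|s]].
Qed.

Lemma mobius_cobweb (x : cobweb F n) : (forall m, 0 < F m)%N ->
  mobius (@cle F n) zero x = mobius_level (crank x).
Proof.
move=> Fpos; apply: mobius_fuel_cobweb.
exact: leq_trans (ltn_ord (tag x)) (card_cobweb_gt n Fpos).
Qed.

End CobwebMobius.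

Theorem mainTheorem3 (F : nat -> nat)
  (Fpos : forall m, (0 < F m)%N) (F0 : F 0%N = 1%N) (F1 : F 1%N = 1%N)
  (n : nat) (zero : cobweb F n) (hzero : crank zero = 0%N) :
  (n = 0%N -> cobweb_charpoly zero = 1) /\
  ((1 <= n)%N -> cobweb_charpoly zero = 'X^n - 'X^(n.-1)).
Proof.
have chiE : cobweb_charpoly zero
    = \sum_(i < n.+1) (mobius_level i)%:P * 'X^(n - i).
  rewrite /cobweb_charpoly.
  under eq_bigr do rewrite mobius_cobweb //.
  rewrite (@big_cobweb_rank _ F n predT (fun i => (mobius_level i)%:P * 'X^(n - i))).
  apply: eq_bigr => i _.
  by rewrite -mulrnAl -polyCMn mobius_level_mulrn.
rewrite chiE; split => [-> | ]; first by rewrite big_ord1 mul1r.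
case: n {zero hzero chiE} => // n _.
rewrite !big_ord_recl big1 => [|i _]; last by rewrite mul0r.
by rewrite /= subn0 subSS subn0 mul1r addr0 polyCN mulN1r.
Qed.
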